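(* Let $\mathcal{C}$ be a non-attacking $q$-configuration. Then there exists $N$ such that for all $n \ge N$ we have $\mathcal{C} \subset \mathcal{B}_n$ and $$\mathrm{cover}_n(\mathcal{C}) = (4n-3)q - \mathrm{inloss}_n(\mathcal{C}) - \mathrm{cenloss}_n(\mathcal{C}).$$
   Context: For $n \in \mathbb{N}$ let $I_n = \{\lfloor (2-n)/2 \rfloor, \ldots, \lfloor n/2 \rfloor\}$ and $\mathcal{B}_n = I_n \times I_n$. A configuration is a finite set $\mathcal{C} \subset \mathbb{Z}\times\mathbb{Z}$; a $q$-configuration has $|\mathcal{C}|=q$. For $Q=(x,y)$, $A(Q) = \{(x+i,y),(x,y+i),(x+i,y+i),(x+i,y-i) : i \in \mathbb{Z}\setminus\{0\}\}$, $A(\mathcal{C}) = \bigcup_{Q\in\mathcal{C}} A(Q)$, and $\mathrm{cover}_n(\mathcal{C}) = |(\mathcal{C}\cup A(\mathcal{C}))\cap \mathcal{B}_n|$. $\mathcal{C}$ is non-attacking if $Q'\notin A(Q)$ for all distinct $Q,Q'\in\mathcal{C}$. The attacking number is $a_{\mathcal{C}}(s) = \#\{Q \in \mathcal{C} : s \in A(Q)\}$ and the internal loss is $\mathrm{inloss}_n(\mathcal{C}) = \sum_{s \in A(\mathcal{C})\cap\mathcal{B}_n} (a_{\mathcal{C}}(s) - 1)$. The centralized loss of a Queen $Q=(x,y)$ on $\mathcal{B}_n$ is $\mathrm{cenloss}_n(Q) = 2\max\{|x|,|y|\}$ if $n$ is odd, and $\mathrm{cenloss}_n(Q) = 1 +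 2\min_{c}\max\{|x-c_1|,|y-c_2|\}$ if $n$ is even, the minimum over the four central squares $c=(c_1,c_2)\in\{(0,0),(1,0),(0,1),(1,1)\}$; and $\mathrm{cenloss}_n(\mathcal{C}) = \sum_{Q\in\mathcal{C}}\mathrm{cenloss}_n(Q)$. *)

From mathcomp Require Import all_boot all_order all_algebra.
Set Implicit Arguments. Unset Strict Implicit. Unset Printing Implicit Defensive.
Import Order.TTheory GRing.Theory Num.Theory.
Local Open Scope ring_scope.

Definition square := (int * int)%type.

(* I_n = { floor((2-n)/2), ..., floor(n/2) }  ( %/ on int with divisor 2 is floor) *)
Definition Ilo (n : nat) : int := ((2 - n%:Z) %/ 2)%Z.
Definition Ihi (n : nat) : int := ((n%:Z) %/ 2)%Z.
Definition In (n : nat) : seq int :=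
  [seq Ilo n + i%:Z | i <- iota 0 (absz (Ihi n - Ilo n + 1))].
Definition Bn (n : nat) : seq square := [seq (a, b) | a <- In n, b <- In n].

Definition inA (Q s : square) : bool :=
  (s != Q) &&
  [|| s.1 == Q.1, s.2 == Q.2, s.1 - Q.1 == s.2 - Q.2 | s.1 - Q.1 == Q.2 - s.2].

Definition is_config (C : seq square) : bool := uniq C.

Definition non_attacking (C : seq square) : Prop :=
  forall Q Q', Q \in C -> Q' \in C -> Q != Q' -> ~~ inA Q Q'.

Definition inAC (C : seq square) (s : square) : bool := has (fun Q => inA Q s) C.

Definition coverq (n : nat) (C : seq square) : nat :=
  count (fun s => (s \in C) || inAC C s) (Bn n).

Definition attnum (C : seq square) (s : square) : nat := count (fun Q => inA Q s) C.

Definition inloss (n : nat) (C : seq square) : nat :=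
  (\sum_(s <- Bn n | inAC C s) (attnum C s - 1))%N.

Definition cenlossQ (n : nat) (Q : square) : nat :=
  if odd n then (2 * maxn (absz (Q.1)) (absz (Q.2)))%N
  else (1 + 2 * minn (minn (maxn (absz (Q.1 - 0)) (absz (Q.2 - 0))) (maxn (absz (Q.1 - 1)) (absz (Q.2 - 0))))
                     (minn (maxn (absz (Q.1 - 0)) (absz (Q.2 - 1))) (maxn (absz (Q.1 - 1)) (absz (Q.2 - 1)))))%N.

Definition cenloss (n : nat) (C : seq square) : nat := (\sum_(Q <- C) cenlossQ n Q)%N.

From mathcomp Require Import all_boot all_order all_algebra.
From mathcomp Require Import zify.
Import Order.TTheory GRing.Theory Num.Theory.
Local Open Scope ring_scope.

(** A queen on [(x, y)] in [B_n] attacks the other [n - 1] squares of its row and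
    of its column, and the other squares of its two diagonals, which have
    [n - |x - y|] and [n - |x + y - c|] squares, [c] being the sum of the two ends
    of [I_n]; these two defects add up to [cenloss_n (x, y)].  Summing over the
    queens counts each attacked square [s] exactly [a_C(s)] times, an excess of
    [inloss_n C] over [|A(C) ∩ B_n|]; and as no queen of a non-attacking
    configuration is attacked, [cover_n C = q + |A(C) ∩ B_n|]. *)

Lemma Ihi_val n : Ihi n = (n %/ 2)%N%:Z.
Proof. rewrite /Ihi; lia. Qed.

Lemma Ilo_Ihi n : Ilo n = Ihi n + 1 - n%:Z.
Proof. rewrite /Ilo /Ihi; lia. Qed.

Lemma In_eq n : In n = [seq Ilo n + i%:Z | i <- iota 0 n].
Proof. by rewrite /In Ilo_Ihi; congr (map _ (iota 0 _)); lia. Qed.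

Lemma size_In n : size (In n) = n.
Proof. by rewrite In_eq size_map size_iota. Qed.

Lemma uniq_In n : uniq (In n).
Proof. by rewrite In_eq map_inj_uniq ?iota_uniq // => i j /=; lia. Qed.

Lemma mem_In n x : (x \in In n) = (Ilo n <= x <= Ihi n).
Proof.
rewrite In_eq Ilo_Ihi; apply/mapP/idP => [[i] | x_in].
  by rewrite mem_iota => /andP[_ lt_i_n] ->; lia.
by exists (absz (x - (Ihi n + 1 - n%:Z))%R); rewrite ?mem_iota; lia.
Qed.

Lemma count_iota_itv (a b : int) n :
  count (fun i : nat => a <= i%:Z < b) (iota 0 n) =
    (minn (absz (Num.max b 0)) n - absz (Num.max a 0))%N.
Proof.
elim: n => [|n IHn]; first by rewrite /=; lia.
rewrite -addn1 iotaD count_cat IHn /= addn0.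
by case: (boolP (a <= n%:Z < b)) => /=; lia.
Qed.

Lemma count_In_shift n (d : int) :
  count (fun a => a + d \in In n) (In n) = (n - absz d)%N.
Proof.
rewrite {2}In_eq count_map.
rewrite (eq_count (a2 := fun i : nat => - d <= i%:Z < n%:Z - d)); last first.
  by move=> i /=; rewrite mem_In Ilo_Ihi; apply/idP/idP; lia.
by rewrite count_iota_itv; lia.
Qed.

Lemma count_In_reflect n (c : int) :
  count (fun a => c - a \in In n) (In n) = (n - absz (c - (Ilo n + Ihi n))%R)%N.
Proof.
rewrite {2}In_eq count_map.
rewrite (eq_count (a2 := fun i : nat =>
    c - Ilo n - Ihi n <= i%:Z < c - Ilo n - Ihi n + n%:Z)); last first.
  by move=> i /=; rewrite mem_In Ilo_Ihi; apply/idP/idP; lia.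
by rewrite count_iota_itv Ilo_Ihi; lia.
Qed.

Lemma mem_Bn n s : (s \in Bn n) = (s.1 \in In n) && (s.2 \in In n).
Proof.
apply/allpairsP/andP => [[[a b] [a_in b_in ->]] // | [s1_in s2_in]].
by exists s; case: s s1_in s2_in.
Qed.

Lemma uniq_Bn n : uniq (Bn n).
Proof. by apply: allpairs_uniq; rewrite ?uniq_In // => -[a b] [c d] _ _ /= ->. Qed.

Lemma count_Bn n (P : pred square) :
  count P (Bn n) = (\sum_(a <- In n) count (fun b => P (a, b)) (In n))%N.
Proof.
rewrite -sum1_count big_mkcond big_allpairs.
by apply: eq_bigr => a _; rewrite -big_mkcond sum1_count.
Qed.

Lemma count_Bn_column n x :
  x \in In n -> count (fun s : square => s.1 == x) (Bn n) = n.
Proof.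
move=> x_in; rewrite count_Bn (big_rem x x_in) /= eqxx count_predT size_In.
rewrite big1_seq ?addn0 // => a /andP[_].
by rewrite mem_rem_uniq ?uniq_In // => /andP[/negbTE -> _]; rewrite count_pred0.
Qed.

Lemma count_Bn_graph n (f : int -> int) :
  count (fun s : square => s.2 == f s.1) (Bn n) =
    count (fun a => f a \in In n) (In n).
Proof.
rewrite count_Bn -sumn_count sumnE big_map.
by apply: eq_bigr => a _; rewrite -count_uniq_mem ?uniq_In.
Qed.

Lemma count_predU_disjoint (T : Type) (a b : pred T) s :
  (forall z, a z -> b z = false) ->
  count (fun z => a z || b z) s = (count a s + count b s)%N.
Proof.
move=> ab0; rewrite -count_predUI (@eq_count _ (predI a b) pred0) ?count_pred0 ?addn0 //.
by move=> z /=; case: (boolP (a z)) => // /ab0 ->.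
Qed.

Lemma count_punctured (T : eqType) (L : pred T) s z :
  uniq s -> z \in s -> L z -> (count (fun t => (t != z) && L t) s).+1 = count L s.
Proof.
move=> s_uniq z_in Lz; rewrite -[count L s]size_filter -(count_predC (pred1 z)).
rewrite count_uniq_mem ?filter_uniq // mem_filter Lz z_in /= add1n count_filter.
by congr _.+1; apply: eq_count => t /=; rewrite andbC.
Qed.

Lemma cenlossQ_diag n x y :
  cenlossQ n (x, y) = (absz (x - y)%R + absz (x + y - (Ilo n + Ihi n))%R)%N.
Proof. by rewrite /cenlossQ Ilo_Ihi Ihi_val /=; have := modn2 n; case: odd; lia. Qed.

Lemma count_inA_cenlossQ n Q :
  Q \in Bn n -> (count (inA Q) (Bn n) + cenlossQ n Q + 4 = 4 * n)%N.
Proof.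
case: Q => x y QB; have := QB; rewrite mem_Bn => /andP[/= x_in y_in].
pose P (L : pred square) s := (s != (x, y)) && L s.
pose col (s : square) := s.1 == x.
pose row (s : square) := s.2 == y.
pose diag (s : square) := s.2 == s.1 + (y - x).
pose anti (s : square) := s.2 == x + y - s.1.
have line (L : pred square) : L (x, y) -> (count (P L) (Bn n)).+1 = count L (Bn n).
  exact: count_punctured (uniq_Bn n) QB.
have col_n := line col (eqxx _); rewrite count_Bn_column // in col_n.
have row_n := line row (eqxx _).
rewrite count_Bn_graph y_in count_predT size_In in row_n.
have diag_n := line diag (ltac:(by rewrite /diag /= addrC subrK)).
rewrite (count_Bn_graph n (fun a => a + (y - x))) count_In_shift in diag_n.
have anti_n := line anti (ltac:(by rewrite /anti /= addrC addKr)).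
rewrite (count_Bn_graph n (fun a => x + y - a)) count_In_reflect in anti_n.
rewrite cenlossQ_diag.
rewrite (@eq_count _ _ (fun s => P col s || (P row s || (P diag s || P anti s)))); last first.
  by move=> [a b]; rewrite /inA /P /col /row /diag /anti /= !xpair_eqE; lia.
rewrite !count_predU_disjoint;
  try by move=> [a b]; rewrite /P /col /row /diag /anti /= !xpair_eqE; lia.
by move: x_in y_in (Ilo_Ihi n); rewrite !mem_In; lia.
Qed.

Lemma sum_count_exchange (T U : Type) (r : T -> pred U) (s : seq T) (t : seq U) :
  (\sum_(x <- s) count (r x) t = \sum_(y <- t) count (r^~ y) s)%N.
Proof.
under eq_bigr do rewrite -sum1_count big_mkcond.
rewrite exchange_big /=.
by apply: eq_bigr => y _; rewrite -sum1_count [RHS]big_mkcond.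
Qed.

Lemma sum_count_inA n (C : seq square) :
  (\sum_(Q <- C) count (inA Q) (Bn n) = inloss n C + count (inAC C) (Bn n))%N.
Proof.
rewrite sum_count_exchange /inloss -sum1_count -big_split /= [RHS]big_mkcond.
apply: eq_bigr => s _; rewrite /inAC /attnum has_count.
by case: posnP => [-> // | count_pos]; rewrite subnK.
Qed.

Lemma coverq_non_attacking n (C : seq square) :
  uniq C -> non_attacking C -> {subset C <= Bn n} ->
  coverq n C = (size C + count (inAC C) (Bn n))%N.
Proof.
move=> C_uniq C_na CB; rewrite /coverq count_predU_disjoint; last first.
  move=> s s_in; apply/negbTE/hasP => -[Q Q_in QAs].
  have Qs : Q != s by move: QAs; rewrite /inA eq_sym => /andP[].
  by move: (C_na Q s Q_in s_in Qs); rewrite QAs.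
congr (_ + _)%N; rewrite -size_filter; apply/esym/perm_size/uniq_perm => //.
  exact: filter_uniq (uniq_Bn n).
by move=> s; rewrite mem_filter andb_idr //; apply: CB.
Qed.

Lemma mem_Bn_large n x y : (2 * maxn (absz x) (absz y) + 2 <= n)%N -> (x, y) \in Bn n.
Proof. by move=> n_large; rewrite mem_Bn !mem_In Ilo_Ihi Ihi_val /=; lia. Qed.

Lemma eventually_sub_Bn (C : seq square) :
  exists N, forall n, (N <= n)%N -> {subset C <= Bn n}.
Proof.
exists (2 * \max_(Q <- C) maxn (absz Q.1) (absz Q.2) + 2)%N => n n_large [x y] Q_in.
apply: mem_Bn_large; apply: leq_trans n_large; rewrite leq_add2r leq_mul2l /=.
exact: (@leq_bigmax_seq _ C xpredT (fun Q : square => maxn (absz Q.1) (absz Q.2)) _ Q_in).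
Qed.

Lemma sum_count_inA_cenloss {n} {C : seq square} : {subset C <= Bn n} ->
  (\sum_(Q <- C) count (inA Q) (Bn n) + cenloss n C + 4 * size C = 4 * n * size C)%N.
Proof.
move=> CB; rewrite /cenloss -sum1_size !big_distrr -!big_split /=.
by apply: eq_big_seq => Q /CB /count_inA_cenlossQ; rewrite !muln1.
Qed.

Theorem mainTheorem5 (q : nat) (C : seq square) :
  is_config C -> size C = q -> non_attacking C ->
  exists N : nat, forall n : nat, (N <= n)%N ->
    all (fun Q => Q \in Bn n) C /\
    (coverq n C)%:Z =
      (4 * n%:Z - 3) * q%:Z - (inloss n C)%:Z - (cenloss n C)%:Z.
Proof.
move=> C_uniq <- C_na; have [N CB] := eventually_sub_Bn C.
exists N => n /CB {}CB; split; first exact/allP.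
have := sum_count_inA_cenloss CB; rewrite sum_count_inA coverq_non_attacking //.
lia.
Qed.
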